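(* Let $p$ be an odd prime and $G=\langle a,b : (a[a^p,b])^p,\ b^p\rangle$. Then for every $i\geq1$, $G/\gamma_i(G)\cong (C_p*C_p)/\gamma_i(C_p*C_p)$; that is, $G$ is weakly para-$(C_p*C_p)$.
   Context: Commutator convention: $[x,y]=x^{-1}y^{-1}xy$. $C_p*C_p=\langle a,b:a^p,b^p\rangle$. Lower central series: $\gamma_1(G)=G$, $\gamma_k(G)=[G,\gamma_{k-1}(G)]$. *)

(* The free group on {a,b} is built as reduced words;
   finitely presented groups F/N and their lower central series are handled via
   subgroups of F (preimages), since MathComp has no infinite group theory. *)
From mathcomp Require Import all_boot.
Set Implicit Arguments. Unset Strict Implicit. Unset Printing Implicit Defensive.

(* A letter (g, e): generator g (false = a, true = b), e = true means inverse. *)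
Definition letter := (bool * bool)%type.
Definition linv (x : letter) : letter := (x.1, ~~ x.2).

Fixpoint reduced (w : seq letter) : bool :=
  match w with
  | x :: ((y :: _) as t) => (y != linv x) && reduced t
  | _ => true
  end.

Definition push (x : letter) (acc : seq letter) : seq letter :=
  match acc with
  | y :: t => if y == linv x then t else x :: acc
  | [::] => [:: x]
  end.

Definition reduce (w : seq letter) : seq letter := foldr push [::] w.

Definition F2 := {w : seq letter | reduced w}.

Definition fg_one : F2 := exist _ [::] isT.
Definition fg_mul (u v : F2) : F2 := insubd fg_one (reduce (val u ++ val v)).
Definition fg_inv (u : F2) : F2 := insubd fg_one (rev (map linv (val u))).
Definition fg_a : F2 := exist _ [:: (false, false)] isT.
Definition fg_b : F2 := exist _ [:: (true, false)] isT.
Definition fg_pow (x : F2) (n : nat) : F2 := iter n (fg_mul x) fg_one.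

Definition fg_comm (x y : F2) : F2 :=
  fg_mul (fg_mul (fg_mul (fg_inv x) (fg_inv y)) x) y.
Definition fg_conj (x g : F2) : F2 := fg_mul (fg_mul (fg_inv g) x) g.

Inductive fg_gen (S : F2 -> Prop) : F2 -> Prop :=
  | fg_gen_base x : S x -> fg_gen S x
  | fg_gen_one : fg_gen S fg_one
  | fg_gen_mul x y : fg_gen S x -> fg_gen S y -> fg_gen S (fg_mul x y)
  | fg_gen_inv x : fg_gen S x -> fg_gen S (fg_inv x).

Definition ncl (rels : seq F2) : F2 -> Prop :=
  fg_gen (fun x => exists r g, r \in rels /\ x = fg_conj r g).

(* For the group Q = F/N (N normal), [lcs_pre N i] is the full preimage in F of
   gamma_i(Q), with gamma_1(Q) = Q and gamma_k(Q) = [Q, gamma_{k-1}(Q)], i.e.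
   the subgroup generated by N and the commutators [g,h], h in gamma_{k-1}. *)
Fixpoint lcs_pre (N : F2 -> Prop) (i : nat) : F2 -> Prop :=
  match i with
  | 0 => fun _ => True
  | k.+1 =>
      match k with
      | 0 => fun _ => True
      | _ => fg_gen (fun x => N x \/ exists g h, lcs_pre N k h /\ x = fg_comm g h)
      end
  end.

(* F/K1 and F/K2 (K1, K2 normal subgroups of F) are isomorphic: there is a map
   f : F -> F inducing a well-defined, injective, multiplicative and surjective
   map F/K1 -> F/K2. *)
Definition quot_iso (K1 K2 : F2 -> Prop) : Prop :=
  exists f : F2 -> F2,
    [/\ forall x y, K1 (fg_mul (fg_inv x) y) <-> K2 (fg_mul (fg_inv (f x)) (f y)),
        forall x y, K2 (fg_mul (fg_inv (f (fg_mul x y))) (fg_mul (f x) (f y))) &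
        forall z, exists x, K2 (fg_mul (fg_inv (f x)) z)].

Definition relG (p : nat) : seq F2 :=
  [:: fg_pow (fg_mul fg_a (fg_comm (fg_pow fg_a p) fg_b)) p; fg_pow fg_b p].
Definition relC (p : nat) : seq F2 := [:: fg_pow fg_a p; fg_pow fg_b p].

From HB Require Import structures.
From mathcomp Require Import all_boot.
Set Implicit Arguments. Unset Strict Implicit. Unset Printing Implicit Defensive.

(* In G the relator (a c)^p with c = [a^p, b] differs from a^p by an element of
   the normal closure of c.  Hence a^p lies in every term of the lower central
   series of G: if a^p is in gamma_k, then c is in gamma_(k+1), so modulo
   gamma_(k+1) the relator reduces to a^p.  Conversely, in C_p * C_p the
   relator a^p kills c and therefore (a c)^p.  So both presentations have the
   same normal subgroup modulo each gamma_i, and the identity of the free group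
   induces the isomorphisms. *)

Lemma linvK : involutive linv.
Proof. by case=> g e; rewrite /linv negbK. Qed.

Lemma reduced_behead x w : reduced (x :: w) -> reduced w.
Proof. by case: w => //= y w /andP[]. Qed.

Lemma reducedE w : reduced w = sorted (fun x y => y != linv x) w.
Proof. by elim: w => //= x [|y w] //= ->. Qed.

Lemma reduced_push x w : reduced w -> reduced (push x w).
Proof.
case: w => //= y w Hw; case: ifP => [_|Hy]; first exact: reduced_behead Hw.
by rewrite /= Hy Hw.
Qed.

Lemma reduced_foldr_push u w : reduced w -> reduced (foldr push w u).
Proof. by move=> Hw; elim: u => //= x u; apply: reduced_push. Qed.

Lemma reduce_reduced w : reduced (reduce w).
Proof. exact: reduced_foldr_push. Qed.

Lemma reduce_id w : reduced w -> reduce w = w.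
Proof.
elim: w => //= x w IH Hw; rewrite IH; last exact: reduced_behead Hw.
by case: w Hw {IH} => //= y w /andP[/negbTE->].
Qed.

Lemma push_linvK x w : reduced w -> push x (push (linv x) w) = w.
Proof.
case: w => [|y w] /=; first by rewrite eqxx.
rewrite linvK; case: eqP => [->|_] Hw /=; last by rewrite eqxx.
by case: w Hw => //= z w /andP[/negbTE->].
Qed.

Lemma foldr_push_push x u w : reduced w ->
  foldr push w (push x u) = push x (foldr push w u).
Proof.
move=> Hw; case: u => //= y u; case: eqP => // ->.
by rewrite push_linvK // reduced_foldr_push.
Qed.

Lemma foldr_push_reduce u w : reduced w -> foldr push w (reduce u) = foldr push w u.
Proof. by move=> Hw; elim: u => //= x u IH; rewrite foldr_push_push // IH. Qed.

Lemma reduce_cat u v : reduce (u ++ v) = foldr push (reduce v) u.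
Proof. exact: foldr_cat. Qed.

Lemma foldr_push_inv u : reduced u -> foldr push u (rev (map linv u)) = [::].
Proof.
elim: u => //= x u IH Hu.
by rewrite rev_cons foldr_rcons /= linvK eqxx IH // (reduced_behead Hu).
Qed.

Lemma reduced_inv u : reduced u -> reduced (rev (map linv u)).
Proof.
rewrite !reducedE rev_sorted sorted_map; apply: sub_sorted => x y /=.
by apply: contra => /eqP->; rewrite linvK.
Qed.

Lemma val_fg_mul u v : val (fg_mul u v) = reduce (val u ++ val v).
Proof. by rewrite /fg_mul insubdK // /in_mem /= reduce_reduced. Qed.

Lemma val_fg_inv u : val (fg_inv u) = rev (map linv (val u)).
Proof. by rewrite /fg_inv insubdK // /in_mem /= reduced_inv // (valP u). Qed.

Lemma fg_mulA : associative fg_mul.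
Proof.
move=> x y z; apply: val_inj; rewrite !val_fg_mul.
rewrite [LHS]reduce_cat [reduce (reduce _)]reduce_id ?reduce_reduced //.
rewrite [RHS]reduce_cat foldr_push_reduce ?reduce_reduced //.
by rewrite reduce_cat foldr_cat.
Qed.

Lemma fg_mul1g : left_id fg_one fg_mul.
Proof. by move=> x; apply: val_inj; rewrite val_fg_mul reduce_id // (valP x). Qed.

Lemma fg_mulg1 : right_id fg_one fg_mul.
Proof. by move=> x; apply: val_inj; rewrite val_fg_mul cats0 reduce_id // (valP x). Qed.

Lemma fg_mulVg : left_inverse fg_one fg_inv fg_mul.
Proof.
move=> x; apply: val_inj.
by rewrite val_fg_mul val_fg_inv reduce_cat reduce_id ?foldr_push_inv // (valP x).
Qed.

Lemma fg_invK : involutive fg_inv.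
Proof.
move=> x; apply: val_inj; rewrite !val_fg_inv map_rev revK -map_comp.
by rewrite (eq_map (g := id)) ?map_id // => y; apply: linvK.
Qed.

Lemma fg_mulgV : right_inverse fg_one fg_inv fg_mul.
Proof. by move=> x; rewrite -{1}(fg_invK x) fg_mulVg. Qed.

HB.instance Definition _ := Choice.on F2.
HB.instance Definition _ :=
  isGroup.Build F2 fg_mulA fg_mul1g fg_mulg1 fg_mulVg fg_mulgV.

Local Open Scope group_scope.

Lemma fg_commE x y : fg_comm x y = [~ x, y].
Proof. by rewrite /fg_comm /commg /conjg /= !mulgA. Qed.

Lemma fg_conjE x g : fg_conj x g = x ^ g.
Proof. by rewrite /fg_conj /conjg /= mulgA. Qed.

Lemma fg_powE x n : fg_pow x n = x ^+ n.
Proof. exact: iter_mulg_1. Qed.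

Definition is_subgroup (G : groupType) (K : G -> Prop) :=
  [/\ K 1, forall x y, K x -> K y -> K (x * y) & forall x, K x -> K x^-1].
Definition is_normal (G : groupType) (K : G -> Prop) := forall x g, K x -> K (x ^ g).

Lemma normal_expMr (G : groupType) (K : G -> Prop) (x c : G) n :
  is_subgroup K -> is_normal K -> K c -> K ((x * c) ^+ n / x ^+ n).
Proof.
case=> K1 KM KV nK Kc; elim: n => [|n IH]; first by rewrite invg1 mulg1.
have -> : (x * c) ^+ n.+1 / x ^+ n.+1 = (c * ((x * c) ^+ n / x ^+ n)) ^ x^-1.
  by rewrite !expgS invgM /conjg invgK !mulgA.
by apply: nK; apply: KM.
Qed.

Lemma normal_expMr_iff (G : groupType) (K : G -> Prop) (x c : G) n :
  is_subgroup K -> is_normal K -> K c -> K ((x * c) ^+ n) <-> K (x ^+ n).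
Proof.
move=> subK nK Kc; have Kd := normal_expMr x n subK nK Kc.
case: subK => _ KM KV; split=> Kx.
  by have := KM _ _ (KV _ Kd) Kx; rewrite invgF mulgVK.
by have := KM _ _ Kd Kx; rewrite mulgVK.
Qed.

Lemma fg_gen_subgroup S : is_subgroup (fg_gen S).
Proof. by split; [apply: fg_gen_one | apply: fg_gen_mul | apply: fg_gen_inv]. Qed.

Lemma fg_gen_min S (K : F2 -> Prop) : is_subgroup K -> (forall x, S x -> K x) ->
  forall x, fg_gen S x -> K x.
Proof. by case=> K1 KM KV SK x; elim=> *; auto. Qed.

Lemma fg_gen_normal S : (forall x g, S x -> fg_gen S (x ^ g)) -> is_normal (fg_gen S).
Proof.
move=> SJ x g; elim=> {x} [x /SJ //| | x y _ Kx _ Ky | x _ Kx].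
- by rewrite conj1g; apply: fg_gen_one.
- by rewrite conjMg; apply: fg_gen_mul.
- by rewrite conjVg; apply: fg_gen_inv.
Qed.

Lemma ncl_normal rels : is_normal (ncl rels).
Proof.
apply: fg_gen_normal => x h [r [g [Hr ->]]]; apply: fg_gen_base.
by exists r, (g * h); rewrite !fg_conjE conjgM.
Qed.

Lemma ncl_min rels (K : F2 -> Prop) : is_subgroup K -> is_normal K ->
  (forall r, r \in rels -> K r) -> forall x, ncl rels x -> K x.
Proof.
move=> subK nK relsK; apply: fg_gen_min => // _ [r [g [/relsK Kr ->]]].
by rewrite fg_conjE; apply: nK.
Qed.

Lemma ncl_rel rels r : r \in rels -> ncl rels r.
Proof. by move=> Hr; apply: fg_gen_base; exists r, 1; rewrite fg_conjE conjg1. Qed.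

Lemma lcs_pre_subgroup N k : is_subgroup (lcs_pre N k).
Proof. by case: k => [|[|k]] /=; [split..| apply: fg_gen_subgroup]. Qed.

Lemma lcs_pre_normal N k : is_normal N -> is_normal (lcs_pre N k).
Proof.
move=> nN; elim: k => [|[|k] IH] //=; apply: fg_gen_normal => x g.
case=> [Nx | [y [h [Kh ->]]]]; apply: fg_gen_base; first by left; apply: nN.
by right; exists (y ^ g), (h ^ g); rewrite !fg_commE conjRg; split; first exact: IH.
Qed.

Lemma lcs_pre_base N k x : N x -> lcs_pre N k x.
Proof. by case: k => [|[|k]] //= Nx; apply: fg_gen_base; left. Qed.

Lemma lcs_pre_comm N k g h : lcs_pre N k h -> lcs_pre N k.+1 [~ g, h].
Proof. by case: k => // k Kh; apply: fg_gen_base; right; exists g, h; rewrite fg_commE. Qed.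

Lemma lcs_pre_mono (N1 N2 : F2 -> Prop) : (forall k x, N1 x -> lcs_pre N2 k x) ->
  forall k x, lcs_pre N1 k x -> lcs_pre N2 k x.
Proof.
move=> N12; elim=> [|[|k] IH] //=; apply: fg_gen_min; first exact: fg_gen_subgroup.
move=> _ [/(N12 k.+2) // | [g [h [Kh ->]]]].
by rewrite fg_commE; apply: (lcs_pre_comm (k := k.+1)); apply: IH.
Qed.

Lemma quot_iso_id (K1 K2 : F2 -> Prop) : is_subgroup K2 -> (forall x, K1 x <-> K2 x) ->
  quot_iso K1 K2.
Proof.
case=> K2one _ _ K12; exists id; split=> [x y | x y | z]; first exact: K12.
  by rewrite fg_mulVg.
by exists z; rewrite fg_mulVg.
Qed.

Section Presentations.

Variable p : nat.

Let a : F2 := fg_a.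
Let b : F2 := fg_b.
Let NG := ncl (relG p).
Let NC := ncl (relC p).

Lemma relG_relator : NG ((a * [~ a ^+ p, b]) ^+ p).
Proof. by apply: ncl_rel; rewrite /relG !fg_powE fg_commE inE eqxx. Qed.

Lemma expa_lcs_relG k : lcs_pre NG k (a ^+ p).
Proof.
elim: k => [|k IH] //.
have subK := lcs_pre_subgroup NG k.+1.
have nK : is_normal (lcs_pre NG k.+1) by apply/lcs_pre_normal/ncl_normal.
have Kc : lcs_pre NG k.+1 [~ a ^+ p, b].
  by rewrite -invgR; case: subK => _ _; apply; apply: lcs_pre_comm.
by apply/(normal_expMr_iff _ _ subK nK Kc)/lcs_pre_base/relG_relator.
Qed.

Lemma ncl_relC_lcs_relG k x : NC x -> lcs_pre NG k x.
Proof.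
apply: ncl_min; [exact: lcs_pre_subgroup | exact/lcs_pre_normal/ncl_normal |].
move=> r; rewrite !inE => /orP[/eqP-> | /eqP->].
  by rewrite fg_powE; apply: expa_lcs_relG.
by apply/lcs_pre_base/ncl_rel; rewrite !inE eqxx orbT.
Qed.

Lemma ncl_relG_relC x : NG x -> NC x.
Proof.
have subK : is_subgroup NC := fg_gen_subgroup _.
have nK : is_normal NC by apply: ncl_normal.
have Kap : NC (a ^+ p) by rewrite -fg_powE; apply: ncl_rel; rewrite inE eqxx.
have Kc : NC [~ a ^+ p, b] by case: subK => _ KM KV; apply/KM/nK/Kap/KV.
apply: ncl_min => // r; rewrite !inE => /orP[/eqP-> | /eqP->].
  by rewrite !fg_powE fg_commE; apply/(normal_expMr_iff _ _ subK nK Kc).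
by apply: ncl_rel; rewrite !inE eqxx orbT.
Qed.

Lemma lcs_pre_relG_relC k x : lcs_pre NG k x <-> lcs_pre NC k x.
Proof.
split; apply: lcs_pre_mono => {}k {}x; first by move/ncl_relG_relC; apply: lcs_pre_base.
exact: ncl_relC_lcs_relG.
Qed.

End Presentations.

Theorem mainTheorem12 (p : nat) (hp : prime p) (hodd : odd p) (i : nat) (hi : 1 <= i) :
  quot_iso (lcs_pre (ncl (relG p)) i) (lcs_pre (ncl (relC p)) i).
Proof.
exact/quot_iso_id/lcs_pre_relG_relC/lcs_pre_subgroup.
Qed.
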